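(* For any $\mu\in\mathbb F^\times$, the elements $\prod_{i=0}^{d'-1}(A-\mu q^{2i}-\mu^{-1}q^{-2i})$, $\prod_{i=0}^{d'-1}(B-\mu q^{2i}-\mu^{-1}q^{-2i})$ and $\prod_{i=0}^{d'-1}(C-\mu q^{2i}-\mu^{-1}q^{-2i})$ are central in $\triangle_q$.
   Context: $\mathbb F$ is an algebraically closed field and $q\in\mathbb F^\times$ a root of unity of order $d\notin\{1,2,4\}$; $d'=d$ if $d$ odd, $d'=d/2$ if $d$ even. $\triangle_q$ is the unital associative $\mathbb F$-algebra with generators $A,B,C$ subject to the relations that each of $A+\frac{qBC-q^{-1}CB}{q^2-q^{-2}}$, $B+\frac{qCA-q^{-1}AC}{q^2-q^{-2}}$, $C+\frac{qAB-q^{-1}BA}{q^2-q^{-2}}$ is central. *)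

From HB Require Import structures.
From mathcomp Require Import all_boot all_order all_algebra all_field.
Set Implicit Arguments. Unset Strict Implicit. Unset Printing Implicit Defensive.
Import GRing.Theory.
Local Open Scope ring_scope.

Inductive gen3 (F : fieldType) (R : lalgType F) (a b c : R) : R -> Prop :=
  | gen3_scal (k : F) : gen3 a b c (k%:A)
  | gen3_a : gen3 a b c a
  | gen3_b : gen3 a b c b
  | gen3_c : gen3 a b c c
  | gen3_add x y : gen3 a b c x -> gen3 a b c y -> gen3 a b c (x + y)
  | gen3_mul x y : gen3 a b c x -> gen3 a b c y -> gen3 a b c (x * y).

Definition central3 (F : fieldType) (R : lalgType F) (a b c z : R) : Prop :=
  forall x, gen3 a b c x -> z * x = x * z.

Definition aw_expr (F : fieldType) (R : lalgType F) (q : F) (x y z : R) : R :=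
  x + (q ^+ 2 - q ^- 2)^-1 *: (q *: (y * z) - q^-1 *: (z * y)).

(* (a, b, c) satisfy the defining relations of the universal Askey-Wilson
   algebra: each of the three expressions is central (in the algebra
   generated by a, b, c). *)
Definition AW_relations (F : fieldType) (R : lalgType F) (q : F) (a b c : R) : Prop :=
  [/\ central3 a b c (aw_expr q a b c),
      central3 a b c (aw_expr q b c a)
    & central3 a b c (aw_expr q c a b)].

Definition dprime (d : nat) : nat := if odd d then d else d./2.

Definition cprod (F : fieldType) (R : lalgType F) (d : nat) (q mu : F) (x : R) : R :=
  \prod_(i < dprime d) (x - (mu * q ^+ (2 * i) + mu^-1 * q ^- (2 * i))%:A).

From HB Require Import structures.
From mathcomp Require Import all_boot all_order all_algebra all_field.
From mathcomp Require Import ring.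
Set Implicit Arguments. Unset Strict Implicit. Unset Printing Implicit Defensive.
Import GRing.Theory.
Local Open Scope ring_scope.

(* Let P(t) = prod_i (t - mu q^(2i) - mu^-1 q^(-2i)) and z = P(A).  Since z is
   a polynomial in A it commutes with A and with the central element
   gamma = C + (q A B - q^-1 B A)/(q^2 - q^-2), so by that relation it is
   enough to show z B = B z.  Left and right multiplication by A are commuting
   operators x and y, and z B - B z = (P(x) - P(y)) B.  Put
   T = (y - q^-2 x)/(q^2 - q^-2) and S = (q^2 x - y)/(q^2 - q^-2), so that
   x = T + S and y = q^2 T + q^-2 S.  Modulo T S - 1 each factor
   T + S - a - a^-1 equals -a^-1 (T - a)(S - a), hence P(x) is congruent to
   a constant times (T^d' - mu^d')(S^d' - mu^d'), which is unchanged by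
   T -> q^2 T, S -> q^-2 S because q^2 has order d'.  So
   P(x) - P(y) = (T S - 1) g, where g vanishes on the diagonal x = y.
   Finally (T S - 1) B = q T(A) gamma - beta, with beta the central element
   of the relation for B, commutes with A, so g(x, y) acts on it as
   g(A, A) = 0.  The statements for B and C follow by cyclic symmetry. *)

Section HornerLR.
Variables (F : comNzRingType) (R : algType F) (a : R).
Implicit Types (P Q : {poly {poly F}}) (p : {poly F}) (u v : R) (k : F).

(* The inner variable acts by left and the outer one by right multiplication
   by [a]. *)
Definition horner_lr P v : R := \sum_(i < size P) horner_alg a P`_i * v * a ^+ i.

Lemma horner_lr_widen n P v : (size P <= n)%N ->
  horner_lr P v = \sum_(i < n) horner_alg a P`_i * v * a ^+ i.
Proof.
move=> leP; rewrite /horner_lr.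
rewrite (big_ord_widen n (fun i => horner_alg a P`_i * v * a ^+ i) leP) big_mkcond.
apply: eq_bigr => i _; case: ltnP => // /(nth_default 0) ->.
by rewrite rmorph0 !mul0r.
Qed.

Lemma horner_lr0 v : horner_lr 0 v = 0.
Proof. by rewrite /horner_lr size_poly0 big_ord0. Qed.

Lemma horner_lrD P Q v : horner_lr (P + Q) v = horner_lr P v + horner_lr Q v.
Proof.
pose n := maxn (size P) (size Q).
rewrite (@horner_lr_widen n P) ?leq_maxl // (@horner_lr_widen n Q) ?leq_maxr //.
rewrite (@horner_lr_widen n) ?(leq_trans (size_polyD _ _)) // -big_split.
by apply: eq_bigr => i _; rewrite coefD rmorphD !mulrDl.
Qed.

Lemma horner_lrN P v : horner_lr (- P) v = - horner_lr P v.
Proof.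
rewrite /horner_lr size_polyN -sumrN.
by apply: eq_bigr => i _; rewrite coefN rmorphN !mulNr.
Qed.

Lemma horner_lrB P Q v : horner_lr (P - Q) v = horner_lr P v - horner_lr Q v.
Proof. by rewrite horner_lrD horner_lrN. Qed.

Lemma horner_lrC p v : horner_lr p%:P v = horner_alg a p * v.
Proof.
by rewrite (@horner_lr_widen 1) ?size_polyC ?leq_b1 // big_ord1 coefC mulr1.
Qed.

Lemma horner_lr1 v : horner_lr 1 v = v.
Proof. by rewrite -polyC1 horner_lrC rmorph1 mul1r. Qed.

Lemma horner_lrMX P v : horner_lr (P * 'X) v = horner_lr P v * a.
Proof.
rewrite (@horner_lr_widen (size P).+1); last first.
  by rewrite (leq_trans (size_polyMleq _ _)) // size_polyX addn2.
rewrite big_ord_recl coefMX eqxx rmorph0 !mul0r add0r /horner_lr mulr_suml.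
by apply: eq_bigr => i _; rewrite coefMX exprSr !mulrA.
Qed.

Lemma horner_lrX v : horner_lr 'X v = v * a.
Proof. by rewrite -['X]mul1r horner_lrMX horner_lr1. Qed.

Lemma horner_lrCM p P v :
  horner_lr (p%:P * P) v = horner_alg a p * horner_lr P v.
Proof.
rewrite (@horner_lr_widen (size P)); last by rewrite mul_polyC size_scale_leq.
rewrite /horner_lr mulr_sumr.
by apply: eq_bigr => i _; rewrite coefCM rmorphM !mulrA.
Qed.

Lemma horner_lrM P Q v : horner_lr (P * Q) v = horner_lr P (horner_lr Q v).
Proof.
elim/poly_ind: P => [|P p IH]; first by rewrite mul0r !horner_lr0.
by rewrite mulrDl !horner_lrD mulrAC !horner_lrMX IH horner_lrCM horner_lrC.
Qed.

Lemma horner_lr_mapC p v : horner_lr (map_poly polyC p) v = v * horner_alg a p.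
Proof.
elim/poly_ind: p => [|p k IH]; first by rewrite !rmorph0 horner_lr0 mulr0.
rewrite rmorphD rmorphM /= map_polyX map_polyC horner_lrD horner_lrMX IH.
rewrite horner_lrC !rmorphD rmorphM /= horner_algX horner_algC.
by rewrite mulrDr mulrA mulr_algl mulr_algr.
Qed.

Lemma horner_lr_is_linear P : linear (horner_lr P).
Proof.
move=> k u w; rewrite /horner_lr scaler_sumr -big_split.
by apply: eq_bigr => i _; rewrite mulrDr mulrDl -scalerAr -scalerAl.
Qed.

HB.instance Definition _ P :=
  GRing.isLinear.Build F R R *:%R (horner_lr P) (horner_lr_is_linear P).

Lemma horner_lrCCM k P v : horner_lr (k%:P%:P * P) v = k *: horner_lr P v.
Proof. by rewrite horner_lrCM horner_algC mulr_algl. Qed.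

Lemma horner_alg_comm p : horner_alg a p * a = a * horner_alg a p.
Proof. by rewrite -{2 3}(horner_algX a) -!rmorphM mulrC. Qed.

Lemma horner_lr_comm P v : a * v = v * a ->
  horner_lr P v = horner_alg a P.['X] * v.
Proof.
move=> av; rewrite horner_coef rmorph_sum mulr_suml /horner_lr.
apply: eq_bigr => i _; rewrite rmorphM rmorphXn /= horner_algX -!mulrA.
by congr (_ * _); apply: commrX.
Qed.

End HornerLR.

(* [g] vanishes on the diagonal, and on elements commuting with [a] the operator
   [horner_lr a g] is left multiplication by [g(a, a)]. *)
Lemma horner_alg_comm_of_factor (F : idomainType) (R : algType F) (a : R)
    (p : {poly F}) (e g : {poly {poly F}}) (v : R) :
  p%:P - map_poly polyC p = e * g -> e.['X] != 0 ->
  a * horner_lr a e v = horner_lr a e v * a ->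
  horner_alg a p * v = v * horner_alg a p.
Proof.
move=> peg e_neq0 a_ev; apply/eqP; rewrite -subr_eq0.
have g_diag : g.['X] = 0.
  have := congr1 (horner^~ 'X) peg; rewrite hornerM hornerD hornerN hornerC.
  have -> : (map_poly polyC p).['X] = p := comp_polyXr p.
  by rewrite subrr => /esym/eqP; rewrite mulf_eq0 (negPf e_neq0) => /eqP.
rewrite -horner_lrC -horner_lr_mapC -horner_lrB peg mulrC horner_lrM.
by rewrite (horner_lr_comm _ a_ev) g_diag rmorph0 mul0r.
Qed.

Section CongruenceModElement.
Variables (K : comNzRingType) (e : K).

Definition eqmodr (u v : K) : Prop := exists g, u - v = e * g.

Lemma eqmodr_sym u v : eqmodr u v -> eqmodr v u.
Proof. by case=> g uvg; exists (- g); rewrite mulrN -uvg opprB. Qed.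

Lemma eqmodr_trans u v w : eqmodr u v -> eqmodr v w -> eqmodr u w.
Proof.
by case=> g1 h1 [g2 h2]; exists (g1 + g2); rewrite mulrDr -h1 -h2 addrA subrK.
Qed.

Lemma eqmodr_mul u1 v1 u2 v2 :
  eqmodr u1 v1 -> eqmodr u2 v2 -> eqmodr (u1 * u2) (v1 * v2).
Proof.
case=> g1 h1 [g2 h2]; exists (u1 * g2 + g1 * v2).
have -> : u1 * u2 - v1 * v2 = u1 * (u2 - v2) + (u1 - v1) * v2 by ring.
by rewrite h1 h2; ring.
Qed.

Lemma eqmodr_prod n (u v : 'I_n -> K) : (forall i, eqmodr (u i) (v i)) ->
  eqmodr (\prod_(i < n) u i) (\prod_(i < n) v i).
Proof.
move=> uv; apply: (big_ind2 eqmodr) => //; last by move=> *; apply: eqmodr_mul.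
by exists 0; rewrite subrr mulr0.
Qed.

End CongruenceModElement.

Lemma eqmodr_prod_sub_addV (K : comNzRingType) n (al be : 'I_n -> K) (T S : K) :
  (forall i, al i * be i = 1) ->
  eqmodr (T * S - 1) (\prod_(i < n) (T + S - (al i + be i)))
    (\prod_(i < n) (- be i * (T - al i) * (S - al i))).
Proof.
move=> albe; apply: eqmodr_prod => i; exists (be i).
apply/eqP; rewrite -subr_eq0.
have -> : T + S - (al i + be i) - - be i * (T - al i) * (S - al i)
  - (T * S - 1) * be i = (1 - al i * be i) * (T + S - al i) by ring.
by rewrite albe subrr mul0r.
Qed.

Lemma expf_eq1_neq0 (F : fieldType) n (x : F) : (0 < n)%N -> x ^+ n = 1 -> x != 0.
Proof. by move=> n_gt0 xn1; rewrite -unitfE -(unitrX_pos x n_gt0) xn1 unitr1. Qed.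

Section PrimitiveRootProducts.
Variables (F : fieldType) (K : comNzRingType) (f : {rmorphism F -> K}).

Lemma prod_sub_prim_root n (zeta mu : F) (Z : K) :
  n.-primitive_root zeta -> mu != 0 ->
  \prod_(i < n) (Z - f (mu * zeta ^+ i)) = Z ^+ n - f (mu ^+ n).
Proof.
move=> prim_zeta mu_neq0; set u := Z * f mu^-1.
have cfu : commr_rmorph f u by move=> c; apply: mulrC.
have prod_u : \prod_(i < n) (u - f (zeta ^+ i)) = u ^+ n - 1.
  have := congr1 (horner_morph cfu) (factor_Xn_sub_1 prim_zeta).
  rewrite big_mkord rmorph_prod rmorphB rmorph1 /= rmorphXn /= horner_morphX => <-.
  by apply: eq_bigr => i _; rewrite rmorphB /= horner_morphX horner_morphC.
have muV : f mu * f mu^-1 = 1 by rewrite -rmorphM mulfV ?rmorph1.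
have Z_mu_u : Z = f mu * u by rewrite mulrCA muV mulr1.
transitivity (\prod_(i < n) (f mu * (u - f (zeta ^+ i)))).
  by apply: eq_bigr => i _; rewrite mulrBr -Z_mu_u rmorphM.
rewrite big_split prod_u prodr_const card_ord.
by rewrite /= mulrBr mulr1 -exprMn -Z_mu_u rmorphXn.
Qed.

Lemma eqmodr_prod_shift n (zeta mu c : F) (T S : K) :
  n.-primitive_root zeta -> mu != 0 -> c ^+ n = 1 ->
  eqmodr (T * S - 1)
    (\prod_(i < n) (T + S - f (mu * zeta ^+ i + (mu * zeta ^+ i)^-1)))
    (\prod_(i < n)
       (f c * T + f c^-1 * S - f (mu * zeta ^+ i + (mu * zeta ^+ i)^-1))).
Proof.
move=> prim_zeta mu_neq0 cn1; have n_gt0 := prim_order_gt0 prim_zeta.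
pose al (i : 'I_n) := f (mu * zeta ^+ i).
pose be (i : 'I_n) := f ((mu * zeta ^+ i)^-1).
have albe i : al i * be i = 1.
  rewrite -rmorphM mulfV ?rmorph1 // mulf_neq0 ?expf_neq0 //.
  exact: expf_eq1_neq0 n_gt0 (prim_expr_order prim_zeta).
have factor_prod W Z : eqmodr (W * Z - 1)
    (\prod_(i < n) (W + Z - f (mu * zeta ^+ i + (mu * zeta ^+ i)^-1)))
    ((\prod_(i < n) - be i) * (W ^+ n - f (mu ^+ n)) * (Z ^+ n - f (mu ^+ n))).
  rewrite -!(prod_sub_prim_root _ prim_zeta mu_neq0) -!big_split /=.
  under eq_bigr do rewrite rmorphD.
  exact: eqmodr_prod_sub_addV.
have cV : f c * f c^-1 = 1.
  by rewrite -rmorphM mulfV ?rmorph1 ?(expf_eq1_neq0 n_gt0).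
have cTS : f c * T * (f c^-1 * S) - 1 = T * S - 1.
  by rewrite mulrACA cV mul1r.
have cTn : (f c * T) ^+ n = T ^+ n by rewrite exprMn -rmorphXn cn1 rmorph1 mul1r.
have cSn : (f c^-1 * S) ^+ n = S ^+ n.
  by rewrite exprMn -rmorphXn exprVn cn1 invr1 rmorph1 mul1r.
have := factor_prod (f c * T) (f c^-1 * S); rewrite cTS cTn cSn.
by move/eqmodr_sym; apply: eqmodr_trans; apply: factor_prod.
Qed.
End PrimitiveRootProducts.

Section AskeyWilsonOperators.
Variables (F : fieldType) (q : F).
Hypothesis q2_sub_qV2 : q ^+ 2 - q ^- 2 != 0.

Definition aw_T : {poly {poly F}} :=
  ((q ^+ 2 - q ^- 2)^-1)%:P%:P * ('X - (q ^- 2)%:P%:P * 'X%:P).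
Definition aw_S : {poly {poly F}} :=
  ((q ^+ 2 - q ^- 2)^-1)%:P%:P * ((q ^+ 2)%:P%:P * 'X%:P - 'X).

Definition cpoly n (mu : F) : {poly F} :=
  \prod_(i < n) ('X - (mu * q ^+ (2 * i) + mu^-1 * q ^- (2 * i))%:P).

Lemma q_neq0 : q != 0.
Proof. by apply: contraNneq q2_sub_qV2 => ->; rewrite expr0n invr0 subrr. Qed.

Let mulVCC_q2_sub_qV2 :
  ((q ^+ 2 - q ^- 2)^-1)%:P%:P * ((q ^+ 2)%:P%:P - (q ^- 2)%:P%:P)
  = 1 :> {poly {poly F}}.
Proof. by rewrite -!rmorphB -!rmorphM mulVf // !rmorph1. Qed.

Lemma aw_T_add_S : aw_T + aw_S = 'X%:P.
Proof.
apply/eqP; rewrite -subr_eq0.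
have -> : aw_T + aw_S - 'X%:P =
  (((q ^+ 2 - q ^- 2)^-1)%:P%:P * ((q ^+ 2)%:P%:P - (q ^- 2)%:P%:P) - 1) * 'X%:P.
  by rewrite /aw_T /aw_S; ring.
by rewrite mulVCC_q2_sub_qV2 subrr mul0r.
Qed.

Lemma aw_T_add_S_shift : (q ^+ 2)%:P%:P * aw_T + (q ^- 2)%:P%:P * aw_S = 'X.
Proof.
apply/eqP; rewrite -subr_eq0.
have -> : (q ^+ 2)%:P%:P * aw_T + (q ^- 2)%:P%:P * aw_S - 'X =
  (((q ^+ 2 - q ^- 2)^-1)%:P%:P * ((q ^+ 2)%:P%:P - (q ^- 2)%:P%:P) - 1) * 'X.
  by rewrite /aw_T /aw_S; ring.
by rewrite mulVCC_q2_sub_qV2 subrr mul0r.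
Qed.

Lemma aw_TS_diag_neq0 : (aw_T * aw_S - 1).['X] != 0.
Proof.
apply/eqP => /(congr1 (horner^~ 0)).
rewrite /aw_T /aw_S !hornerE /= oppr0 !(mulr0, mul0r) sub0r => /eqP.
by rewrite oppr_eq0 oner_eq0.
Qed.

Lemma cpoly_eqmodr n mu : n.-primitive_root (q ^+ 2) -> mu != 0 ->
  eqmodr (aw_T * aw_S - 1) (cpoly n mu)%:P (map_poly polyC (cpoly n mu)).
Proof.
move=> prim_q2 mu_neq0; rewrite /cpoly !rmorph_prod.
have theta (i : 'I_n) : mu * q ^+ (2 * i) + mu^-1 * q ^- (2 * i)
    = mu * (q ^+ 2) ^+ i + (mu * (q ^+ 2) ^+ i)^-1.
  by rewrite invfM -!exprM.
under eq_bigr do rewrite rmorphB /= -aw_T_add_S theta.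
under [X in eqmodr _ _ X]eq_bigr do
  rewrite rmorphB /= map_polyX map_polyC /= -aw_T_add_S_shift theta.
exact: (eqmodr_prod_shift (polyC \o polyC) _ _ prim_q2 mu_neq0
  (prim_expr_order prim_q2)).
Qed.

End AskeyWilsonOperators.

Lemma gen3_horner_alg (F : fieldType) (R : algType F) (a b c : R)
    (p : {poly F}) :
  gen3 a b c (horner_alg a p).
Proof.
elim/poly_ind: p => [|p k IH].
  by rewrite rmorph0 -(scale0r 1); apply: gen3_scal.
rewrite rmorphD rmorphM /= horner_algX horner_algC.
by apply: gen3_add; [apply: gen3_mul => //; apply: gen3_a | apply: gen3_scal].
Qed.

Lemma central3_of_comm (F : fieldType) (R : algType F) (a b c z : R) :
  z * a = a * z -> z * b = b * z -> z * c = c * z -> central3 a b c z.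
Proof.
move=> za zb zc x; elim=> [k||||y w _ zy _ zw|y w _ zy _ zw] //.
- by rewrite mulr_algr mulr_algl.
- by rewrite mulrDr mulrDl zy zw.
- by rewrite mulrA zy -mulrA zw mulrA.
Qed.

Lemma gen3_rotate (F : fieldType) (R : lalgType F) (a b c x : R) :
  gen3 a b c x -> gen3 b c a x.
Proof.
elim=> [k||||y w _ hy _ hw|y w _ hy _ hw].
- exact: gen3_scal.
- exact: gen3_c.
- exact: gen3_a.
- exact: gen3_b.
- exact: gen3_add.
- exact: gen3_mul.
Qed.

Lemma central3_rotate (F : fieldType) (R : lalgType F) (a b c z : R) :
  central3 a b c z -> central3 b c a z.
Proof. by move=> az x /gen3_rotate/gen3_rotate; apply: az. Qed.

Lemma AW_relations_rotate (F : fieldType) (R : lalgType F) (q : F) (a b c : R) :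
  AW_relations q a b c -> AW_relations q b c a.
Proof. by case=> ha hb hc; split; apply: central3_rotate. Qed.

Section AskeyWilsonCentral.
Variables (F : fieldType) (q : F).
Hypothesis q2_sub_qV2 : q ^+ 2 - q ^- 2 != 0.
Variables (R : algType F) (A B C : R).

Lemma horner_lr_aw_S : horner_lr A (aw_S q) B = q *: (aw_expr q C A B - C).
Proof.
rewrite /aw_S horner_lrCCM horner_lrB horner_lrCCM horner_lrC horner_algX.
rewrite horner_lrX.
rewrite /aw_expr [C + _]addrC addrK !scalerBr !scalerA.
set k := (q ^+ 2 - q ^- 2)^-1; have q_neq0 := q_neq0 q2_sub_qV2.
by congr (_ *: _ - _ *: _); field.
Qed.

Lemma horner_lr_aw_T : q *: horner_lr A (aw_T q) C = aw_expr q B C A - B.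
Proof.
rewrite /aw_T horner_lrCCM horner_lrB horner_lrCCM horner_lrC horner_algX.
rewrite horner_lrX.
rewrite /aw_expr [B + _]addrC addrK !scalerBr !scalerA.
set k := (q ^+ 2 - q ^- 2)^-1; have q_neq0 := q_neq0 q2_sub_qV2.
by congr (_ *: _ - _ *: _); field.
Qed.

Hypothesis aw_rel : AW_relations q A B C.

Lemma horner_lr_aw_TS_comm :
  A * horner_lr A (aw_T q * aw_S q - 1) B
  = horner_lr A (aw_T q * aw_S q - 1) B * A.
Proof.
have [_ /(_ A (gen3_a _ _ _)) betA /(_ A (gen3_a _ _ _)) gamA] := aw_rel.
have -> : horner_lr A (aw_T q * aw_S q - 1) B =
    q *: (horner_alg A (aw_T q).['X] * aw_expr q C A B) - aw_expr q B C A.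
  rewrite horner_lrB horner_lr1 horner_lrM horner_lr_aw_S linearZ linearB /=.
  rewrite scalerBr horner_lr_aw_T (horner_lr_comm _ (esym gamA)).
  by rewrite opprB addrA addrAC addrK.
rewrite mulrBr mulrBl betA -scalerAr -scalerAl; congr (_ *: _ - _).
by rewrite mulrA -horner_alg_comm -!mulrA gamA.
Qed.

Lemma aw_central_cpoly n mu : n.-primitive_root (q ^+ 2) -> mu != 0 ->
  central3 A B C (horner_alg A (cpoly q n mu)).
Proof.
move=> prim_q2 mu_neq0; set z := horner_alg A _.
have zA : z * A = A * z by apply: horner_alg_comm.
have zB : z * B = B * z.
  have [g eq_g] := cpoly_eqmodr q2_sub_qV2 prim_q2 mu_neq0.
  exact: horner_alg_comm_of_factor eq_g (aw_TS_diag_neq0 q) horner_lr_aw_TS_comm.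
have [_ _ /(_ z (gen3_horner_alg _ _ _ _)) gamz] := aw_rel.
have C_def : C = aw_expr q C A B -
    (q ^+ 2 - q ^- 2)^-1 *: (q *: (A * B) - q^-1 *: (B * A)).
  by rewrite /aw_expr addrK.
have zM x y : z * x = x * z -> z * y = y * z -> z * (x * y) = x * y * z.
  by move=> zx zy; rewrite mulrA zx -mulrA zy mulrA.
apply: central3_of_comm => //; rewrite C_def mulrBr mulrBl gamz.
rewrite -scalerAr -scalerAl mulrBr mulrBl -!scalerAr -!scalerAl.
by rewrite (zM A B) ?(zM B A).
Qed.

End AskeyWilsonCentral.

Lemma sqr_sub_invsqr_neq0 (F : fieldType) (q : F) d :
  d.-primitive_root q -> ~~ (d %| 4)%N -> q ^+ 2 - q ^- 2 != 0.
Proof.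
move=> prim_q; apply: contra => /eqP/subr0_eq q2_eq.
have q_neq0 := expf_eq1_neq0 (prim_order_gt0 prim_q) (prim_expr_order prim_q).
rewrite (prim_order_dvd prim_q) -[4%N]/(2 + 2)%N exprD {1}q2_eq.
by rewrite mulVf ?expf_neq0.
Qed.

Lemma dprime_prim_root (R : nzRingType) (q : R) d :
  d.-primitive_root q -> (dprime d).-primitive_root (q ^+ 2).
Proof.
move=> prim_q; have := exp_prim_root prim_q 2; rewrite /dprime; case: ifP => d_odd.
  have /eqP -> : coprime 2 d by rewrite coprime2n d_odd.
  by rewrite divn1.
have -> : gcdn 2 d = 2 by apply/gcdn_idPl; rewrite dvdn2 d_odd.
by rewrite divn2.
Qed.

Lemma cprod_horner_alg (F : fieldType) (R : algType F) d (q mu : F) (x : R) :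
  cprod d q mu x = horner_alg x (cpoly q (dprime d) mu).
Proof.
rewrite /cprod /cpoly rmorph_prod; apply: eq_bigr => i _.
by rewrite rmorphB /= horner_algX horner_algC.
Qed.

Theorem lemma6p5 (F : closedFieldType) (q : F) (d : nat)
  (hq : d.-primitive_root q) (hd1 : d <> 1%N) (hd2 : d <> 2%N) (hd4 : d <> 4%N)
  (R : algType F) (A B C : R) (hrel : AW_relations q A B C)
  (mu : F) (hmu : mu != 0) :
  [/\ central3 A B C (cprod d q mu A),
      central3 A B C (cprod d q mu B)
    & central3 A B C (cprod d q mu C)].
Proof.
have d_ndvd4 : ~~ (d %| 4)%N.
  apply/negP => /[dup] /(dvdn_leq (isT : (0 < 4)%N)).
  by case: (d) hd1 hd2 hd4 => [|[|[|[|[|]]]]].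
have hk := sqr_sub_invsqr_neq0 hq d_ndvd4.
have central_first (a b c : R) :
    AW_relations q a b c -> central3 a b c (cprod d q mu a).
  move=> rel; rewrite cprod_horner_alg.
  exact: (aw_central_cpoly hk rel (dprime_prim_root hq) hmu).
split.
- exact: central_first.
- by do 2!apply: central3_rotate; apply/central_first/AW_relations_rotate.
- by apply/central3_rotate/central_first; do 2!apply: AW_relations_rotate.
Qed.
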